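(* Let $R$ be a commutative ring, $M$ an $R$-module having at least one prime submodule, $X=\mathrm{Spec}(M)$, $N$ an $R$-module, $K\le M$, and $U=X\setminus V(K)$. Then $\Gamma_{(K:M)}(\mathcal{A}(N,M)(U))=0$.
   Context: For a submodule $L$ of an $R$-module $M$, $(L:M)=\{r\in R\mid rM\subseteq L\}$. A submodule $P$ of $M$ is prime if $P\neq M$ and whenever $rm\in P$ ($r\in R$, $m\in M$) then $r\in (P:M)$ or $m\in P$. $\mathrm{Spec}(M)$ is the set of prime submodules. For $L\le M$, $V(L)=\{P\in X\mid (P:M)\supseteq (L:M)\}$; these are the closed sets of the Zariski topology on $X$. For open $U\subseteq X$, $\mathrm{Supp}(U)=\{(P:M)\mid P\in U\}$. $\mathcal{A}(N,M)(U)$ is the $R$-module (componentwise operations) of families $(\gamma_{\mathfrak p})_{\mathfrak p\in\mathrm{Supp}(U)}\in\prod_{\mathfrak p\in\mathrm{Supp}(U)}N_{\mathfrak p}$ such that for each $Q\in U$ there exist an open neighbourhood $W\subseteq U$ of $Q$ and $s\in R$, $m\in N$ with $s\notin (P:M)$ and $\gamma_{(P:M)}=m/s\in N_{(P:M)}$ for every $P\in W$. For an ideal $I$ and module $H$, $\Gamma_I(H)=\bigcup_{n\ge1}(0:_H I^n)$. *)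

From HB Require Import structures.
From mathcomp Require Import all_boot all_order all_algebra.
Set Implicit Arguments. Unset Strict Implicit. Unset Printing Implicit Defensive.
Import GRing.Theory.
Local Open Scope ring_scope.

Section Defs.
Variable R : comNzRingType.

Definition is_submodule (M : lmodType R) (L : M -> Prop) : Prop :=
  [/\ L 0, (forall x y, L x -> L y -> L (x + y)) &
      (forall (r : R) x, L x -> L (r *: x))].

Definition colon (M : lmodType R) (L : M -> Prop) : R -> Prop :=
  fun r => forall x : M, L (r *: x).

Definition is_prime_submodule (M : lmodType R) (P : M -> Prop) : Prop :=
  [/\ is_submodule P, (exists x, ~ P x) &
      (forall (r : R) (m : M), P (r *: m) -> colon P r \/ P m)].

Definition Vset (M : lmodType R) (L : M -> Prop) (P : M -> Prop) : Prop :=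
  is_prime_submodule P /\ (forall r, colon L r -> colon P r).

Definition spec_open (M : lmodType R) (W : (M -> Prop) -> Prop) : Prop :=
  exists L : M -> Prop, is_submodule L /\
    forall P, W P <-> (is_prime_submodule P /\ ~ Vset L P).

Fixpoint ideal_pow (I : R -> Prop) (n : nat) : R -> Prop :=
  match n with
  | O => fun _ => True
  | S k => fun x => exists s : seq (R * R),
      (forall q, q \in s -> I q.1 /\ ideal_pow I k q.2) /\
      x = \sum_(q <- s) q.1 * q.2
  end.

(* Localization N_p: an element is represented by a fraction m/s (pair (m,s))
   with s ∉ p; two fractions are equal in N_p iff
   exists t ∉ p, t (s' m - s m') = 0. *)
Definition loc_eq (N : lmodType R) (p : R -> Prop) (a b : N * R) : Prop :=
  exists t : R, ~ p t /\ t *: (b.2 *: a.1 - a.2 *: b.1) = 0.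

(* An element of prod_{p in Supp(U)} N_p is represented by a family
   gamma : (R -> Prop) -> N * R, indexed by the ideals p (the components
   at p outside Supp(U) are irrelevant). Supp(U) = {(P:M) | P in U}. *)

Definition in_A (M N : lmodType R) (U : (M -> Prop) -> Prop)
    (gamma : (R -> Prop) -> N * R) : Prop :=
  (forall P, U P -> ~ colon P (gamma (colon P)).2) /\
  (forall Q, U Q -> exists W : (M -> Prop) -> Prop,
     [/\ spec_open W, (forall P, W P -> U P), W Q &
       exists (s : R) (m : N), forall P, W P ->
         ~ colon P s /\ loc_eq (colon P) (gamma (colon P)) (m, s)]).

Definition A_zero (M N : lmodType R) (U : (M -> Prop) -> Prop)
    (gamma : (R -> Prop) -> N * R) : Prop :=
  forall P, U P -> loc_eq (colon P) (gamma (colon P)) (0, 1).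

Definition A_scale (N : lmodType R) (r : R)
    (gamma : (R -> Prop) -> N * R) : (R -> Prop) -> N * R :=
  fun p => (r *: (gamma p).1, (gamma p).2).

Definition in_Gamma (M N : lmodType R) (U : (M -> Prop) -> Prop)
    (I : R -> Prop) (gamma : (R -> Prop) -> N * R) : Prop :=
  in_A U gamma /\ exists n : nat, (1 <= n)%N /\
    forall r, ideal_pow I n r -> A_zero U (A_scale r gamma).

End Defs.

From mathcomp Require Import all_boot all_order all_algebra.
From Stdlib Require Import Classical.
Set Implicit Arguments. Unset Strict Implicit.
Import GRing.Theory.
Local Open Scope ring_scope.

(* For P in U = X \ V(K) there is r in (K:M) with r outside the prime ideal
   (P:M); then r^n lies in (K:M)^n and outside (P:M), so r^n gamma = 0 in
   N_(P:M) forces gamma = 0 there, since r^n becomes a unit in N_(P:M). *)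

Section PrimeColon.
Variables (R : comNzRingType) (M : lmodType R) (P : M -> Prop).
Hypothesis hP : is_prime_submodule P.

Lemma prime_colonM (a b : R) : colon P (a * b) -> colon P a \/ colon P b.
Proof.
case: hP => _ _ hprime hab; have [ha|ha] := classic (colon P a); first by left.
right=> m; have := hab m; rewrite -scalerA => /hprime [//|//].
Qed.

Lemma prime_colon1 : ~ colon P 1.
Proof. by case: hP => _ [x hx] _ h1; apply: hx; rewrite -[x]scale1r. Qed.

Lemma prime_colonX (r : R) (n : nat) : ~ colon P r -> ~ colon P (r ^+ n).
Proof.
move=> hr; elim: n => [|n IH]; first by rewrite expr0; apply: prime_colon1.
by rewrite exprS => /prime_colonM [].
Qed.

End PrimeColon.

Lemma notin_Vset_colon (R : comNzRingType) (M : lmodType R) (K P : M -> Prop) :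
  is_prime_submodule P -> ~ Vset K P -> exists r, colon K r /\ ~ colon P r.
Proof.
move=> hP hV; apply: NNPP => hc; apply: hV; split=> // r hr.
by apply: NNPP => hr'; apply: hc; exists r.
Qed.

Lemma ideal_pow_expr (R : comNzRingType) (I : R -> Prop) (r : R) (n : nat) :
  I r -> ideal_pow I n (r ^+ n).
Proof.
move=> hr; elim: n => [//|n IH] /=.
exists [:: (r, r ^+ n)]; split; last by rewrite big_seq1 exprS.
by move=> q; rewrite inE => /eqP ->.
Qed.

Lemma loc_eq0_scale (R : comNzRingType) (N : lmodType R) (p : R -> Prop)
    (s : R) (a : N * R) :
  (forall t, ~ p t -> ~ p (t * s)) ->
  loc_eq p (s *: a.1, a.2) (0, 1) -> loc_eq p a (0, 1).
Proof.
move=> hs [t [ht]]; rewrite /= !scale1r !scaler0 !subr0 scalerA => eq0.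
by exists (t * s); split; [apply: hs | rewrite !scale1r !scaler0 subr0].
Qed.

Theorem lemma3p6 (R : comNzRingType) (M N : lmodType R) (K : M -> Prop)
  (hM : exists P : M -> Prop, is_prime_submodule P)
  (hK : is_submodule K) :
  let U := fun P : M -> Prop => is_prime_submodule P /\ ~ Vset K P in
  forall gamma : (R -> Prop) -> N * R,
    in_Gamma U (colon K) gamma -> A_zero U gamma.
Proof.
move=> U gamma [_ [n [_ hn]]] P UP; have [hP hV] := UP.
have [r [hrK hrP]] := notin_Vset_colon hP hV.
apply: (@loc_eq0_scale _ _ _ (r ^+ n)).
  by move=> t ht /(prime_colonM hP) [//|]; exact: prime_colonX.
exact: hn _ (ideal_pow_expr n hrK) P UP.
Qed.
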